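(* Let $\alpha\in(0,1)$, let $0=t_0<t_1<\cdots$ be arbitrary time levels with $\tau_k=t_k-t_{k-1}$, and let $n\ge2$. Then (i) $a^{(n)}_{n-k-1}-a^{(n)}_{n-k}=I^{(n)}_{n-k-1}+J^{(n)}_{n-k}$ for $1\le k\le n-1$; (ii) $\frac{2(1-\alpha)}{2-\alpha}a^{(n)}_0-a^{(n)}_1=\frac{\alpha}{2-\alpha}\omega_{1-\alpha}(\tau_n)+J^{(n)}_1$.
   Context: $\omega_\beta(t):=t^{\beta-1}/\Gamma(\beta)$ for $t>0$ and $\beta\notin\{0,-1,-2,\dots\}$ (so $\omega_{-\alpha}(t)=t^{-\alpha-1}/\Gamma(-\alpha)$). $a^{(n)}_{n-k}:=\frac1{\tau_k}\int_{t_{k-1}}^{t_k}\omega_{1-\alpha}(t_n-s)\,ds$ for $1\le k\le n$; $I^{(n)}_{n-k}:=\int_{t_{k-1}}^{t_k}\frac{t-t_k}{\tau_k}\omega_{-\alpha}(t_n-t)\,dt$ for $1\le k\le n$; $J^{(n)}_{n-k}:=\int_{t_{k-1}}^{t_k}\frac{t_{k-1}-t}{\tau_k}\omega_{-\alpha}(t_n-t)\,dt$ for $1\le k\le n-1$. *)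

(* R : realType, Lebesgue integrals (needed since the
   kernels omega_{1-alpha}, omega_{-alpha} are unbounded near t_n). *)
From HB Require Import structures.
From mathcomp Require Import all_boot all_order all_algebra.
From mathcomp Require Import all_classical all_reals all_analysis.
Set Implicit Arguments. Unset Strict Implicit. Unset Printing Implicit Defensive.
Import Order.TTheory GRing.Theory Num.Theory.
Import numFieldNormedType.Exports.
Local Open Scope classical_set_scope.
Local Open Scope ring_scope.

Section Defs.
Variable R : realType.

Definition Gamma_pos (x : R) : R :=
  Rintegral lebesgue_measure `]0%R, +oo[ (fun s : R => s `^ (x - 1) * expR (- s)).

(* Analytic continuation to x not in {0,-1,-2,...}:
   Gamma x = Gamma(x+N) / (x (x+1) ... (x+N-1)) with N large enough that x+N > 0. *)
Definition Gamma (x : R) : R :=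
  let N := if 0 < x then 0%N else (Num.truncn (- x)).+1 in
  Gamma_pos (x + N%:R) / \prod_(i < N) (x + i%:R).

Definition omega (beta s : R) : R := s `^ (beta - 1) / Gamma beta.

Definition tau (t : nat -> R) (k : nat) : R := t k - t k.-1.

(* Coefficients indexed as in the paper: subscript j = n - k, i.e. k = n - j. *)
Definition acoef (alpha : R) (t : nat -> R) (n j : nat) : R :=
  let k := (n - j)%N in
  (tau t k)^-1 * Rintegral lebesgue_measure `[t k.-1, t k]
                   (fun s => omega (1 - alpha) (t n - s)).

Definition Icoef (alpha : R) (t : nat -> R) (n j : nat) : R :=
  let k := (n - j)%N in
  Rintegral lebesgue_measure `[t k.-1, t k]
    (fun s => (s - t k) / tau t k * omega (- alpha) (t n - s)).

Definition Jcoef (alpha : R) (t : nat -> R) (n j : nat) : R :=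
  let k := (n - j)%N in
  Rintegral lebesgue_measure `[t k.-1, t k]
    (fun s => (t k.-1 - s) / tau t k * omega (- alpha) (t n - s)).

End Defs.

From HB Require Import structures.
From mathcomp Require Import all_boot all_order all_algebra.
From mathcomp Require Import all_classical all_reals all_analysis.
From mathcomp Require Import ring zify measurable_realfun.
Import Order.TTheory GRing.Theory Num.Theory.
Import numFieldNormedType.Exports.

(* Both identities are integrations by parts.  Since
   d/ds omega_{1-alpha}(t_n - s) = - omega_{-alpha}(t_n - s), integrating the mean
   a_{n-k} of omega_{1-alpha}(t_n - .) over [t_{k-1}, t_k] by parts against the
   two hat functions of that interval gives
     a_{n-k} = omega_{1-alpha}(t_n - t_k) - J_{n-k}
     a_{n-k} = omega_{1-alpha}(t_n - t_{k-1}) + I_{n-k};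
   (i) is the second one at k + 1 minus the first one at k, and (ii) follows from
   the first one at k = n - 1 together with a_0 = omega_{1-alpha}(tau_n) / (1 - alpha).
   All integrals are computed from the primitive -(d - s)^(p+1)/(p+1) of (d - s)^p;
   on the last interval [t_{n-1}, t_n] the integrands are unbounded, and the
   fundamental theorem of calculus is extended there by monotone convergence. *)

Set Implicit Arguments.
Unset Strict Implicit.
Unset Printing Implicit Defensive.
Local Open Scope ring_scope.
Local Open Scope classical_set_scope.

Section ge0_continuous_FTC2_co.
Variable R : realType.
Local Notation mu := (@lebesgue_measure R).

Lemma itv_co_bigcup_cc (c d : R) (e : R ^nat) :
  (forall m, e m < d) -> e m @[m --> \oo] --> d ->
  \bigcup_m `[c, e m] = `[c, d[.
Proof.
move=> ed e_cvg; apply/seteqP; split=> x /=.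
  by case=> m _; rewrite /= !in_itv /= => /andP[-> xe]; rewrite (le_lt_trans xe).
rewrite in_itv /= => /andP[cx xd].
have [N _ /(_ N (leqnn N)) xe] := cvgr_gt _ e_cvg _ xd.
by exists N => //=; rewrite in_itv /= cx ltW.
Qed.

Lemma ge0_continuous_FTC2_co (f F : R -> R) (c d : R) : c < d ->
  (forall x, c <= x < d -> 0 <= f x) ->
  {in `[c, d[%R, continuous f} ->
  derivable_oo_LRcontinuous F c d ->
  {in `]c, d[%R, F^`() =1 f} ->
  (\int[mu]_(x in `[c, d]) (f x)%:E = (F d)%:E - (F c)%:E)%E.
Proof.
move=> cd f_ge0 cf [dF Fc Fd] F'f.
pose e m : R := d - (d - c) / m.+2%:R.
have ce m : c < e m.
  by rewrite /e ltrBrDl -ltrBrDr ltr_pdivrMr // ltr_pMr ?subr_gt0 // ltr1n.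
have ed m : e m < d by rewrite /e ltrBlDl ltrDr divr_gt0 ?subr_gt0.
have e_cvg : e m @[m --> \oo] --> d.
  rewrite -[X in _ --> X]subr0; apply: cvgB; first exact: cvg_cst.
  rewrite -(mulr0 (d - c)); apply: cvgMr.
  by have := @cvg_harmonic R; rewrite -cvg_shiftS.
have e_nd : nondecreasing_seq (fun m => `[c, e m]).
  move=> m n mn; apply/subsetPset/subset_itvl.
  by rewrite bnd_simp lerB // ler_pM2l ?subr_gt0 // lef_pV2 ?posrE // ler_nat.
have mf : measurable_fun `[c, d[ f.
  apply: subspace_continuous_measurable_fun => //.
  by apply: continuous_in_subspaceT => x; rewrite inE => /cf.
have FTC_e m : (\int[mu]_(x in `[c, e m]) (f x)%:E = (F (e m))%:E - (F c)%:E)%E.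
  apply: continuous_FTC2 (ce m) _ _ _.
  - apply: continuous_in_subspaceT => x; rewrite inE /= in_itv /= => /andP[cx xe].
    by apply: cf; rewrite in_itv /= cx (le_lt_trans xe).
  - split=> //.
    + move=> x; rewrite in_itv /= => /andP[cx xe].
      by apply: dF; rewrite in_itv /= cx (lt_trans xe).
    + apply: cvg_at_left_filter; apply/differentiable_continuous/derivable1_diffP.
      by apply: dF; rewrite in_itv /= ce ed.
  - move=> x; rewrite in_itv /= => /andP[cx xe].
    by apply: F'f; rewrite in_itv /= cx (lt_trans xe).
have f_ge0_e m x : `[c, e m] x -> (0 <= (f x)%:E)%E.
  by rewrite /= in_itv /= => /andP[cx xe]; rewrite lee_fin f_ge0 // cx (le_lt_trans xe).
have mf_e m : measurable_fun `[c, e m] (EFin \o f).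
  apply/measurable_EFinP; apply: measurable_funS mf => //.
  by apply: subset_itv; rewrite bnd_simp.
have := ge0_nondecreasing_set_cvg_integral (mu := mu) e_nd (fun=> measurable_itv _) mf_e f_ge0_e.
rewrite (itv_co_bigcup_cc _ ed e_cvg) -integral_itv_bndo_bndc; last exact/measurable_EFinP.
under eq_cvg do rewrite FTC_e.
move=> /cvg_lim <- //; apply: cvg_lim => //.
apply: cvgeB => //; last exact: cvg_cst.
apply: cvg_EFin; first exact: nearW.
exact: (cvg_at_leftP F d (F d)).1 Fd e (conj ed e_cvg).
Qed.

End ge0_continuous_FTC2_co.

Section powR_subr_integral.
Variable R : realType.
Local Notation mu := (@lebesgue_measure R).

Lemma is_derive_powR_subr (d r x : R) : x < d ->
  is_derive x 1 (fun s => (d - s) `^ r) (- (r * (d - x) `^ (r - 1))).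
Proof.
move=> xd; have -> : (fun s => (d - s) `^ r) = (@powR R ^~ r) \o (fun s => d - s) by [].
rewrite -[- (r * _)]mulrN1; apply: is_derive1_comp.
  by apply: is_derive1_powR; rewrite subr_gt0.
by rewrite -[-1]sub0r; exact: is_deriveB.
Qed.

Lemma is_derive_powR_subr_primitive (d p x : R) : x < d -> p + 1 != 0 ->
  is_derive x 1 (fun s => - (d - s) `^ (p + 1) / (p + 1)) ((d - x) `^ p).
Proof.
move=> xd p1.
have -> : (fun s => - (d - s) `^ (p + 1) / (p + 1)) =
    (- (p + 1)^-1) *: (fun s => (d - s) `^ (p + 1)).
  apply/funext => s; change (- (d - s) `^ (p + 1) / (p + 1) = - (p + 1)^-1 * (d - s) `^ (p + 1)).
  by ring.
apply: (is_derive_eq (is_deriveZ _ (is_derive_powR_subr (p + 1) xd))).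
by rewrite addrK; change (- (p + 1)^-1 * - ((p + 1) * (d - x) `^ p) = (d - x) `^ p); field.
Qed.

Lemma continuous_powR_subr (d r x : R) : x < d ->
  {for x, continuous (fun s => (d - s) `^ r)}.
Proof.
by move=> /(is_derive_powR_subr r)[+ _] => /derivable1_diffP/differentiable_continuous.
Qed.

Lemma within_continuous_powR_subr (a b d r : R) : b < d ->
  {within `[a, b], continuous (fun s => (d - s) `^ r)}.
Proof.
move=> bd; apply: continuous_in_subspaceT => x; rewrite inE /= in_itv /= => /andP[_ xb].
exact/continuous_powR_subr/(le_lt_trans xb).
Qed.

Lemma integrable_powR_subr (a b d r : R) : b < d ->
  mu.-integrable `[a, b] (EFin \o (fun s => (d - s) `^ r)).
Proof.
move=> bd; apply: continuous_compact_integrable; first exact: segment_compact.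
exact: within_continuous_powR_subr.
Qed.

Lemma integral_powR_subr (a b d p : R) : a < b -> b < d -> p + 1 != 0 ->
  (\int[mu]_(x in `[a, b]) ((d - x) `^ p)%:E =
   (((d - a) `^ (p + 1) - (d - b) `^ (p + 1)) / (p + 1))%:E)%E.
Proof.
move=> ab bd p1.
pose F s := - (d - s) `^ (p + 1) / (p + 1).
have dF x : x < d -> is_derive x 1 F ((d - x) `^ p).
  by move=> xd; exact: is_derive_powR_subr_primitive.
have cF x : x < d -> {for x, continuous F}.
  by move=> /dF[+ _] => /derivable1_diffP/differentiable_continuous.
rewrite (@continuous_FTC2 _ _ F) //.
- by rewrite -EFinB /F; congr (_%:E); field.
- exact: within_continuous_powR_subr.
- split.
  + by move=> x; rewrite in_itv /= => /andP[_ xb]; have [] := dF x (lt_trans xb bd).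
  + exact/cvg_at_right_filter/cF/(lt_trans ab).
  + exact/cvg_at_left_filter/cF.
- move=> x; rewrite in_itv /= => /andP[_ xb].
  by have [_ <-] := dF x (lt_trans xb bd); rewrite derive1E.
Qed.

Lemma integral_powR_subr_le (a b d p : R) : a < b -> b <= d -> -1 < p ->
  (\int[mu]_(x in `[a, b]) ((d - x) `^ p)%:E =
   (((d - a) `^ (p + 1) - (d - b) `^ (p + 1)) / (p + 1))%:E)%E.
Proof.
move=> ab bd p1; have p1_gt0 : 0 < p + 1 by rewrite -ltrBlDr sub0r.
move: bd; rewrite le_eqVlt => /predU1P[<-{d}|bd]; last first.
  by apply: integral_powR_subr => //; rewrite gt_eqF.
pose F s := - (b - s) `^ (p + 1) / (p + 1).
have dF x : x < b -> is_derive x 1 F ((b - x) `^ p).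
  by move=> xb; apply: is_derive_powR_subr_primitive => //; rewrite gt_eqF.
rewrite (@ge0_continuous_FTC2_co _ (fun x => (b - x) `^ p) F) //.
- by rewrite -EFinB /F subrr powR0 ?gt_eqF //; congr (_%:E); field; rewrite gt_eqF.
- by move=> x _; rewrite powR_ge0.
- by move=> x; rewrite in_itv /= => /andP[_ xb]; exact: continuous_powR_subr.
- split.
  + by move=> x; rewrite in_itv /= => /andP[_ xb]; have [] := dF x xb.
  + apply/cvg_at_right_filter.
    by have [+ _] := dF a ab => /derivable1_diffP/differentiable_continuous.
  + apply/cvg_at_leftP => u [ub u_cvg].
    have ub0 n : 0 < b - u n by rewrite subr_gt0.
    have ub_cvg : b - u n @[n --> \oo] --> 0.
      by rewrite -(subrr b); apply: cvgB; [exact: cvg_cst | exact: u_cvg].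
    have := (cvg_at_rightP _ 0 0).1 (powR_cvg0 p1_gt0) _ (conj ub0 ub_cvg).
    by rewrite /F subrr powR0 ?gt_eqF // => ?; apply: cvgMl; exact: cvgN.
- move=> x; rewrite in_itv /= => /andP[_ xb].
  by have [_ <-] := dF x xb; rewrite derive1E.
Qed.

Lemma integrable_powR_subr_le (a b d p : R) : a < b -> b <= d -> -1 < p ->
  mu.-integrable `[a, b] (EFin \o (fun s => (d - s) `^ p)).
Proof.
move=> ab bd p1; apply/integrableP; split.
  apply/measurable_EFinP/measurable_funTS.
  apply: (measurableT_comp (f := @powR R ^~ p)); first exact: measurable_powR.
  exact: measurable_funB.
under eq_integral => x _ do rewrite /= ger0_norm ?powR_ge0 //.
by rewrite integral_powR_subr_le // ltry.
Qed.

End powR_subr_integral.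

Section Rintegral_linear_combination.
Context {d : measure_display} {T : measurableType d} {R : realType}.
Variable mu : {measure set T -> \bar R}.

Lemma Rintegral_linear_combination (D : set T) (f g : T -> R) (u v : R) :
  measurable D -> mu.-integrable D (EFin \o f) -> mu.-integrable D (EFin \o g) ->
  \int[mu]_(x in D) (u * f x + v * g x) =
  u * \int[mu]_(x in D) f x + v * \int[mu]_(x in D) g x.
Proof.
move=> mD intf intg; rewrite RintegralD //; first by rewrite !RintegralZl.
  by apply: eq_integrable (integrableZl mD u intf) => // x _; rewrite /= EFinM.
by apply: eq_integrable (integrableZl mD v intg) => // x _; rewrite /= EFinM.
Qed.

End Rintegral_linear_combination.

Section fractional_kernel.
Variables (R : realType) (alpha : R).
Hypothesis alpha01 : 0 < alpha < 1.
Local Notation mu := (@lebesgue_measure R).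
Local Notation G := (Gamma_pos (1 - alpha)).

Let alpha_gt0 : 0 < alpha. Proof. by case/andP: alpha01. Qed.
Let alpha_lt1 : alpha < 1. Proof. by case/andP: alpha01. Qed.

Lemma omega_onemE (x : R) : omega (1 - alpha) x = x `^ (- alpha) / G.
Proof.
rewrite /omega /Gamma ifT ?subr_gt0 // big_ord0 divr1 addr0.
by congr (_ `^ _ / _); ring.
Qed.

Lemma omegaNE (x : R) : omega (- alpha) x = - alpha * x `^ (- alpha - 1) / G.
Proof.
rewrite /omega /Gamma ifF; last by apply/negbTE; rewrite -leNgt oppr_le0 ltW.
have -> : Num.truncn (- - alpha) = 0%N by apply/truncn0Pn; rewrite opprK -ltNge.
by rewrite big_ord1 /= addr0 (addrC (- alpha) 1) invf_div; ring.
Qed.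

Lemma mulr_omegaN (x : R) : 0 <= x -> x * omega (- alpha) x = - alpha * omega (1 - alpha) x.
Proof.
rewrite omegaNE omega_onemE le_eqVlt => /predU1P[<-|x_gt0].
  by rewrite mul0r powR0 ?mul0r ?mulr0 // oppr_eq0 gt_eqF.
have -> : x `^ (- alpha) = x * x `^ (- alpha - 1).
  by rewrite -{2}(powRr1 (ltW x_gt0)) -powRD ?(gt_eqF x_gt0) ?implybT // addrC subrK.
ring.
Qed.

Lemma integrable_omega_onem (a b d : R) : a < b -> b <= d ->
  mu.-integrable `[a, b] (EFin \o (fun s => omega (1 - alpha) (d - s))).
Proof.
move=> ab bd; have p1 : -1 < - alpha by rewrite ltrN2.
apply: eq_integrable (integrableZr _ G^-1 (integrable_powR_subr_le ab bd p1)) => //.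
by move=> x _; rewrite /= omega_onemE EFinM.
Qed.

Lemma integrable_omegaN (a b d : R) : b < d ->
  mu.-integrable `[a, b] (EFin \o (fun s => omega (- alpha) (d - s))).
Proof.
move=> bd; apply: eq_integrable
  (integrableZr _ (- alpha / G) (@integrable_powR_subr R a b d (- alpha - 1) bd)) => //.
by move=> x _; rewrite /= omegaNE -EFinM mulrCA mulrA.
Qed.

Lemma Rintegral_omega_onem (a b d : R) : a < b -> b <= d ->
  \int[mu]_(s in `[a, b]) omega (1 - alpha) (d - s) =
  ((d - a) * omega (1 - alpha) (d - a) - (d - b) * omega (1 - alpha) (d - b)) / (1 - alpha).
Proof.
move=> ab bd; have p1 : -1 < - alpha by rewrite ltrN2.
under eq_Rintegral do rewrite omega_onemE.
rewrite RintegralZr; [|exact: measurable_itv|exact: integrable_powR_subr_le ab bd p1].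
have powRS x : 0 <= x -> x `^ (- alpha + 1) = x * x `^ (- alpha).
  by move=> x0; rewrite -mulr_powRB1 ?addrK // addrC subr_gt0.
rewrite /Rintegral integral_powR_subr_le //= !omega_onemE.
rewrite !powRS ?subr_ge0 ?(ltW (lt_le_trans ab bd)) // (addrC _ 1).
by ring.
Qed.

Lemma Rintegral_omegaN (a b d : R) : a < b -> b < d ->
  \int[mu]_(s in `[a, b]) omega (- alpha) (d - s) =
  omega (1 - alpha) (d - a) - omega (1 - alpha) (d - b).
Proof.
move=> ab bd.
under eq_Rintegral do rewrite omegaNE (mulrC (- alpha)) -mulrA.
rewrite RintegralZr; [|exact: measurable_itv|exact: integrable_powR_subr].
rewrite /Rintegral integral_powR_subr ?subrK ?oppr_eq0 ?gt_eqF //= !omega_onemE.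
(* Generalizing [G^-1] spares [field] the side condition [G != 0]. *)
by move: G^-1 => K; field; rewrite gt_eqF.
Qed.

Lemma Rintegral_omega_onem_by_partsr (a b d : R) : a < b -> b < d ->
  (b - a)^-1 * \int[mu]_(s in `[a, b]) omega (1 - alpha) (d - s) =
  omega (1 - alpha) (d - b) - \int[mu]_(s in `[a, b]) ((a - s) / (b - a) * omega (- alpha) (d - s)).
Proof.
move=> ab bd.
have -> : \int[mu]_(s in `[a, b]) ((a - s) / (b - a) * omega (- alpha) (d - s)) =
    \int[mu]_(s in `[a, b]) (- alpha / (b - a) * omega (1 - alpha) (d - s)
                             + (a - d) / (b - a) * omega (- alpha) (d - s)).
  apply: eq_Rintegral => s; rewrite inE /= in_itv /= => /andP[_ sb].
  rewrite [- alpha / _ * _]mulrAC -mulr_omegaN ?subr_ge0 ?(ltW (le_lt_trans sb bd)) //.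
  by ring.
rewrite Rintegral_linear_combination //; last 2 first.
- exact: integrable_omega_onem (ltW bd).
- exact: integrable_omegaN.
rewrite Rintegral_omegaN // Rintegral_omega_onem ?(ltW bd) //.
by field; rewrite !subr_eq0 (gt_eqF ab) (gt_eqF alpha_lt1).
Qed.

Lemma Rintegral_omega_onem_by_partsl (a b d : R) : a < b -> b <= d ->
  (b - a)^-1 * \int[mu]_(s in `[a, b]) omega (1 - alpha) (d - s) =
  omega (1 - alpha) (d - a) + \int[mu]_(s in `[a, b]) ((s - b) / (b - a) * omega (- alpha) (d - s)).
Proof.
move=> ab bd; have ba_neq0 : b - a != 0 by rewrite subr_eq0 gt_eqF.
have -> : \int[mu]_(s in `[a, b]) ((s - b) / (b - a) * omega (- alpha) (d - s)) =
    \int[mu]_(s in `[a, b]) (alpha / (b - a) * omega (1 - alpha) (d - s)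
                             + (d - b) / (b - a) * omega (- alpha) (d - s)).
  apply: eq_Rintegral => s; rewrite inE /= in_itv /= => /andP[_ sb].
  rewrite [alpha / _ * _]mulrAC -[alpha * _]opprK -mulNr.
  rewrite -mulr_omegaN ?subr_ge0 ?(le_trans sb bd) //.
  by ring.
move: bd; rewrite le_eqVlt => /predU1P[<-{d}|bd].
  rewrite subrr mul0r; under [in RHS]eq_Rintegral do rewrite mul0r addr0.
  rewrite RintegralZl //; last exact: integrable_omega_onem.
  by rewrite Rintegral_omega_onem //; field; rewrite ba_neq0 subr_eq0 (gt_eqF alpha_lt1).
rewrite Rintegral_linear_combination //; last 2 first.
- exact: integrable_omega_onem (ltW bd).
- exact: integrable_omegaN.
rewrite Rintegral_omegaN // Rintegral_omega_onem ?(ltW bd) //.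
by field; rewrite ba_neq0 subr_eq0 (gt_eqF alpha_lt1).
Qed.

End fractional_kernel.

Section coefficients.
Variables (R : realType) (alpha : R) (t : nat -> R).
Hypotheses (alpha01 : 0 < alpha < 1) (t_incr : forall k, t k < t k.+1).

Let t_lt : {homo t : i j / (i < j)%N >-> i < j}.
Proof. exact: homo_ltn lt_trans t_incr. Qed.

Let t_le : {homo t : i j / (i <= j)%N >-> i <= j}.
Proof. exact: homo_leq le_refl le_trans (fun k => ltW (t_incr k)). Qed.

Lemma acoef_by_partsl (n j : nat) : (j < n)%N ->
  acoef alpha t n j = omega (1 - alpha) (t n - t (n - j).-1) + Icoef alpha t n j.
Proof.
move=> jn; rewrite /acoef /Icoef /tau.
apply: Rintegral_omega_onem_by_partsl => //; [apply: t_lt | apply: t_le]; lia.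
Qed.

Lemma acoef_by_partsr (n j : nat) : (0 < j < n)%N ->
  acoef alpha t n j = omega (1 - alpha) (t n - t (n - j)) - Jcoef alpha t n j.
Proof.
move=> jn; rewrite /acoef /Jcoef /tau.
apply: Rintegral_omega_onem_by_partsr => //; apply: t_lt; lia.
Qed.

Lemma acoef0 (n : nat) : (0 < n)%N ->
  acoef alpha t n 0 = omega (1 - alpha) (tau t n) / (1 - alpha).
Proof.
move=> n0; have tn : t n.-1 < t n by apply: t_lt; rewrite ltn_predL.
rewrite /acoef subn0 Rintegral_omega_onem // subrr mul0r subr0 /tau.
have [_ alpha_lt1] := andP alpha01.
by field; rewrite !subr_eq0 (gt_eqF tn) (gt_eqF alpha_lt1).
Qed.

End coefficients.

Theorem lemma4p1 (R : realType) (alpha : R) (t : nat -> R) (n : nat) :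
  0 < alpha < 1 ->
  t 0%N = 0 ->
  (forall k : nat, t k < t k.+1) ->
  (2 <= n)%N ->
  (forall k : nat, (1 <= k <= n - 1)%N ->
     acoef alpha t n (n - k - 1) - acoef alpha t n (n - k)
     = Icoef alpha t n (n - k - 1) + Jcoef alpha t n (n - k))
  /\
  (2 * (1 - alpha) / (2 - alpha) * acoef alpha t n 0 - acoef alpha t n 1
     = alpha / (2 - alpha) * omega (1 - alpha) (tau t n) + Jcoef alpha t n 1).
Proof.
move=> alpha01 _ t_incr n2; split.
- move=> k /andP[k1 kn].
  have jl : (n - k - 1 < n)%N by lia.
  have jr : (0 < n - k < n)%N by lia.
  rewrite acoef_by_partsl // acoef_by_partsr //.
  have -> : (n - (n - k - 1)).-1 = (n - (n - k))%N by lia.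
  by ring.
- have n0 : (0 < n)%N by apply: ltnW.
  rewrite acoef0 // acoef_by_partsr //.
  have [_ alpha_lt1] := andP alpha01.
  rewrite subn1 /tau; field.
  by rewrite !subr_eq0 !gt_eqF // (lt_trans alpha_lt1) // ltr1n.
Qed.
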